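(* For every $b\in[0,1]$ define functions $G^n_b\colon[0,1]^n\to[0,1]$ inductively by $G^1_b(x_0)=\mathsf{Med}_b(\chi_0(x_0),\chi_1(x_0))$, $G^2_b(x_0,x_1)=\mathsf{Med}_b(\chi_0(x_0\vee x_1),\chi_1(x_0\wedge x_1))$, and $G^{n+1}_b(x_0,\dots,x_n)=G^2_b(G^n_b(x_0,\dots,x_{n-1}),x_n)$ for $n\ge2$. Then for every $n\in\mathbb{N}$ and $b\in[0,1]$, $G^n_b$ is an aggregation function and for $\mathbf{x}\in[0,1]^n$: $G^n_b(\mathbf{x})=0$ if $\mathbf{x}=(0,\dots,0)$, $G^n_b(\mathbf{x})=1$ if $\mathbf{x}=(1,\dots,1)$, and $G^n_b(\mathbf{x})=b$ otherwise.
   Context: An $n$-ary aggregation function on $[0,1]$ is a function $f\colon[0,1]^n\to[0,1]$ nondecreasing in each coordinate with $f(0,\dots,0)=0$ and $f(1,\dots,1)=1$. For $a\in[0,1]$, $\chi_a\colon[0,1]\to[0,1]$ is given by $\chi_a(x)=1$ if $x\ge a$ and $x\neq0$, and $\chi_a(x)=0$ otherwise. $\mathsf{Med}_b(x,y)$ is the median of $x,y,b$. $\vee,\wedge$ denote max and min. *)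

From HB Require Import structures.
From mathcomp Require Import all_boot all_order all_algebra.
From mathcomp Require Import reals.
Set Implicit Arguments. Unset Strict Implicit. Unset Printing Implicit Defensive.
Import Order.TTheory GRing.Theory Num.Theory.
Local Open Scope ring_scope.

Section Defs.
Variable R : realType.

Definition chi (a x : R) : R := if (a <= x) && (x != 0) then 1 else 0.

(* Med_b(x,y) = median of x, y, b *)
Definition Med (b x y : R) : R :=
  Num.max (Num.min x y) (Num.min (Num.max x y) b).

Definition G1 (b x0 : R) : R := Med b (chi 0 x0) (chi 1 x0).

Definition G2 (b x0 x1 : R) : R :=
  Med b (chi 0 (Num.max x0 x1)) (chi 1 (Num.min x0 x1)).

(* Gaux n b x = G^n_b(x 0, ..., x (n-1)); value at n = 0 is irrelevant *)
Fixpoint Gaux (n : nat) (b : R) (x : nat -> R) : R :=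
  match n with
  | 0 => 0
  | 1 => G1 b (x 0%N)
  | 2 => G2 b (x 0%N) (x 1%N)
  | (S ((S (S _)) as m)) => G2 b (Gaux m b x) (x m)
  end.

Definition G (n : nat) (b : R) (x : 'I_n -> R) : R :=
  Gaux n b (fun i => if insub i is Some j then x j else 0).

Definition in01 (x : R) : Prop := 0 <= x <= 1.

Definition aggregation (n : nat) (f : ('I_n -> R) -> R) : Prop :=
  [/\ (forall x, (forall i, in01 (x i)) -> in01 (f x)),
      (forall x y, (forall i, in01 (x i)) -> (forall i, in01 (y i)) ->
         (forall i, x i <= y i) -> f x <= f y),
      f (fun _ => 0) = 0
    & f (fun _ => 1) = 1].

End Defs.

From HB Require Import structures.
From mathcomp Require Import all_boot all_order all_algebra.
From mathcomp Require Import reals.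
Set Implicit Arguments. Unset Strict Implicit. Unset Printing Implicit Defensive.
Import Order.TTheory GRing.Theory Num.Theory.
Local Open Scope ring_scope.

(* On [0,1], chi_0 and chi_1 are the indicators of u <> 0 and u = 1, so
   G^2_b(u,v) is 0 when u = v = 0, 1 when u = v = 1, and b otherwise.  Hence
   G^2_b(0,v) and G^2_b(1,v) stay 0 resp. 1 exactly when v does and are b
   otherwise, while G^2_b(b,v) = b (also when b is 0 or 1).  By induction
   G^n_b is 0 on the zero vector, 1 on the unit vector and b elsewhere, and
   monotonicity is read off this closed form. *)

Lemma eq0_and_eq1 (R : nzSemiRingType) (u : R) : (u == 0) && (u == 1) = false.
Proof. by apply/negP=> /andP[/eqP-> ]; rewrite eq_sym oner_eq0. Qed.

Section ClosedForm.
Variable R : realType.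
Implicit Types (b u v : R) (z o : bool).

Definition pick01 b z o : R := if z then 0 else if o then 1 else b.

Lemma in01_0 : in01 (0 : R). Proof. by rewrite /in01 lexx ler01. Qed.

Lemma in01_1 : in01 (1 : R). Proof. by rewrite /in01 lexx ler01. Qed.

Lemma in01_pick01 b z o : in01 b -> in01 (pick01 b z o).
Proof. by move=> hb; rewrite /pick01; case: z; case: o; rewrite // /in01 lexx ler01. Qed.

Lemma pick01_mono b (zx ox zy oy : bool) : in01 b -> (zy -> zx) -> (ox -> oy) ->
  pick01 b zx ox <= pick01 b zy oy.
Proof.
case/andP=> b0 b1; rewrite /pick01.
case: zx => [_|zxyF]; first by case: zy => //; case: oy; rewrite ?ler01.
have -> : zy = false by apply/negP=> /zxyF.
by case: ox => [/(_ isT)->|_] //; case: oy.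
Qed.

Lemma in01_max u v : in01 u -> in01 v -> in01 (Num.max u v).
Proof. by case/andP=> u0 u1 /andP[v0 v1]; rewrite /in01 le_max u0 ge_max u1 v1. Qed.

Lemma in01_min u v : in01 u -> in01 v -> in01 (Num.min u v).
Proof. by case/andP=> u0 u1 /andP[v0 v1]; rewrite /in01 le_min u0 v0 ge_min u1. Qed.

Lemma chi0_in01 u : in01 u -> chi 0 u = (u != 0)%:R.
Proof. by case/andP=> u0 _; rewrite /chi u0; case: (u != 0). Qed.

Lemma chi1_in01 u : in01 u -> chi 1 u = (u == 1)%:R.
Proof.
case/andP=> _ u1; rewrite /chi; have [->|u_ne1] := eqVneq u 1.
  by rewrite lexx oner_neq0.
by rewrite leNgt lt_neqAle u_ne1 u1.
Qed.

Lemma Medxx b u : Med b u u = u.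
Proof. by rewrite /Med maxxx minxx; apply/max_idPl; rewrite ge_min lexx. Qed.

Lemma MedC b u v : Med b u v = Med b v u.
Proof. by rewrite /Med [Num.min u v]minC [Num.max u v]maxC. Qed.

Lemma Med01 b : in01 b -> Med b 0 1 = b.
Proof.
by case/andP=> b0 b1; rewrite /Med (min_l ler01) (max_r ler01) (min_r b1) max_r.
Qed.

Lemma Med_bool b z o : in01 b -> ~~ (z && o) ->
  Med b (~~ z)%:R o%:R = pick01 b z o.
Proof. by move=> hb; case: z; case: o => //= _; rewrite ?Medxx // MedC Med01. Qed.

Lemma max_eq0 u v : in01 u -> in01 v -> (Num.max u v == 0) = (u == 0) && (v == 0).
Proof. by case/andP=> u0 _ /andP[v0 _]; rewrite !eq_le ge_max le_max u0 v0 !andbT. Qed.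

Lemma min_eq1 u v : in01 u -> in01 v -> (Num.min u v == 1) = (u == 1) && (v == 1).
Proof. by case/andP=> _ u1 /andP[_ v1]; rewrite !eq_le le_min ge_min u1 v1. Qed.

Lemma G2_pick01E b u v : in01 b -> in01 u -> in01 v ->
  G2 b u v = pick01 b ((u == 0) && (v == 0)) ((u == 1) && (v == 1)).
Proof.
move=> hb hu hv; have [hmax hmin] := (in01_max hu hv, in01_min hu hv).
rewrite /G2 chi0_in01 // chi1_in01 // max_eq0 // min_eq1 //.
by rewrite Med_bool // andbACA eq0_and_eq1.
Qed.

Lemma G1_pick01E b u : in01 b -> in01 u -> G1 b u = pick01 b (u == 0) (u == 1).
Proof.
by move=> hb hu; rewrite -[u == 0]andbb -[u == 1]andbb -G2_pick01E // /G2 maxxx minxx.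
Qed.

Lemma G2_pick01l b z o v : in01 b -> in01 v -> ~~ (z && o) ->
  G2 b (pick01 b z o) v = pick01 b (z && (v == 0)) (o && (v == 1)).
Proof.
move=> hb hv zo; rewrite G2_pick01E //; last exact: in01_pick01.
have zero_neq1 : (0 == 1 :> R) = false by rewrite eq_sym oner_eq0.
case: z o zo => [] [] // _; rewrite /pick01 ?eqxx ?oner_eq0 ?zero_neq1 //.
by case: ifP => [/andP[/eqP-> _]|_] //; case: ifP => [/andP[/eqP-> _]|_].
Qed.

Implicit Types x : nat -> R.

(* Gaux 2 is G^2_b(x 0, x 1) rather than G^2_b(G^1_b(x 0), x 1), so the case
   m = 0 needs the closed forms. *)
Lemma Gaux_recr b x m : in01 b -> (forall i, (i < 2)%N -> in01 (x i)) ->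
  Gaux m.+2 b x = G2 b (Gaux m.+1 b x) (x m.+1).
Proof.
case: m => [|m] // hb hx; have [hx0 hx1] := (hx 0%N isT, hx 1%N isT).
by rewrite /= G1_pick01E // G2_pick01l ?G2_pick01E ?eq0_and_eq1.
Qed.

Lemma GauxE b x m : in01 b -> (0 < m)%N -> (forall i, (i < m)%N -> in01 (x i)) ->
  Gaux m b x = pick01 b (all (fun i => x i == 0) (iota 0 m))
                        (all (fun i => x i == 1) (iota 0 m)).
Proof.
move=> hb; case: m => // m _; elim: m => [|m IH] hx.
  by rewrite /= !andbT G1_pick01E //; apply: hx.
rewrite Gaux_recr //; last by move=> i i2; apply: hx; apply: leq_trans i2 _.
rewrite IH; last by move=> i /ltnW; apply: hx.
have -> : iota 0 m.+2 = iota 0 m.+1 ++ [:: m.+1] by rewrite -addn1 iotaD.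
rewrite !all_cat !all_seq1 G2_pick01l //; first exact: hx.
by rewrite /= andbACA eq0_and_eq1.
Qed.

End ClosedForm.

Lemma all_iota_insub (T : Type) n (f : 'I_n -> T) (d : T) (P : pred T) :
  all (fun k => P (if insub k is Some i then f i else d)) (iota 0 n) =
  [forall i, P (f i)].
Proof.
apply/allP/forallP => [H i|H k]; first by have := H i; rewrite mem_iota ltn_ord valK; apply.
by rewrite mem_iota => /andP[_ kn]; rewrite insubT.
Qed.

Section Aggregation.
Variables (R : realType) (n : nat) (b : R).
Hypotheses (n_gt0 : (0 < n)%N) (b01 : in01 b).

Lemma G_pick01E (x : 'I_n -> R) : (forall i, in01 (x i)) ->
  G b x = pick01 b [forall i, x i == 0] [forall i, x i == 1].
Proof.
move=> hx; rewrite /G GauxE //; last by move=> k kn; rewrite insubT.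
by rewrite !(all_iota_insub x 0 (pred1 _)).
Qed.

Lemma forall_eq_const (c : R) (x : 'I_n -> R) :
  (forall i, x i = c) -> forall d : R, [forall i, x i == d] = (c == d).
Proof.
by move=> xc d; apply/forallP/idP => [/(_ (Ordinal n_gt0))|/eqP<- i]; rewrite xc.
Qed.

Lemma G_in01 (x : 'I_n -> R) : (forall i, in01 (x i)) -> in01 (G b x).
Proof. by move=> hx; rewrite G_pick01E //; apply: in01_pick01. Qed.

Lemma G_mono (x y : 'I_n -> R) : (forall i, in01 (x i)) -> (forall i, in01 (y i)) ->
  (forall i, x i <= y i) -> G b x <= G b y.
Proof.
move=> hx hy xy; rewrite !G_pick01E //; apply: pick01_mono => //.
  move=> /forallP y0; apply/forallP=> i.
  by case/andP: (hx i) => x0 _; rewrite eq_le x0 andbT -(eqP (y0 i)) xy.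
move=> /forallP x1; apply/forallP=> i.
by case/andP: (hy i) => _ y1; rewrite eq_le y1 -(eqP (x1 i)) xy.
Qed.

Lemma G_all0 (x : 'I_n -> R) : (forall i, x i = 0) -> G b x = 0.
Proof.
move=> x0; rewrite G_pick01E => [|i]; last by rewrite x0; apply: in01_0.
by rewrite (forall_eq_const x0) eqxx.
Qed.

Lemma G_all1 (x : 'I_n -> R) : (forall i, x i = 1) -> G b x = 1.
Proof.
move=> x1; rewrite G_pick01E => [|i]; last by rewrite x1; apply: in01_1.
by rewrite !(forall_eq_const x1) oner_eq0 eqxx.
Qed.

Lemma G_mixed (x : 'I_n -> R) : (forall i, in01 (x i)) ->
  (exists i, x i != 0) -> (exists i, x i != 1) -> G b x = b.
Proof.
move=> hx [i xi0] [j xj1]; rewrite G_pick01E // /pick01.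
have -> : [forall k, x k == 0] = false by apply: contraNF xi0 => /forallP; apply.
by have -> : [forall k, x k == 1] = false by apply: contraNF xj1 => /forallP; apply.
Qed.

End Aggregation.

Theorem lemma1 (R : realType) (n : nat) (b : R) :
  (0 < n)%N -> in01 b ->
  aggregation (@G R n b) /\
  (forall x : 'I_n -> R, (forall i, in01 (x i)) ->
     [/\ (forall i, x i = 0) -> G b x = 0,
         (forall i, x i = 1) -> G b x = 1
       & (exists i, x i != 0) -> (exists i, x i != 1) -> G b x = b]).
Proof.
move=> n_gt0 b01; split.
  split; [exact: G_in01 | exact: G_mono | exact: G_all0 | exact: G_all1].
by move=> x hx; split; [exact: G_all0 | exact: G_all1 | exact: G_mixed].
Qed.
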